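(* For $n\ge2$ and all $P,Q\in\Gamma_n$, $D_{Jh}(P\|Q)\le \frac1{12}D_{\Psi\Delta}(P\|Q)$.
   Context: $\Gamma_n=\{P=(p_1,\dots,p_n): p_i>0,\ \sum p_i=1\}$. $h(P\|Q)=\frac12\sum_{i=1}^n(\sqrt{p_i}-\sqrt{q_i})^2$; $J(P\|Q)=\sum_{i=1}^n(p_i-q_i)\ln\frac{p_i}{q_i}$; $\Delta(P\|Q)=\sum_{i=1}^n\frac{(p_i-q_i)^2}{p_i+q_i}$; $\Psi(P\|Q)=\sum_{i=1}^n\frac{(p_i-q_i)^2(p_i+q_i)}{p_iq_i}$. $D_{Jh}=\frac18J-h$, $D_{\Psi\Delta}=\frac1{16}\Psi-\frac14\Delta$. *)

From Stdlib Require Import Reals Lra.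
Open Scope R_scope.

Fixpoint sumn (n : nat) (f : nat -> R) : R :=
  match n with
  | O => 0
  | S k => sumn k f + f k
  end.

Definition in_Gamma (n : nat) (p : nat -> R) : Prop :=
  (forall i, (i < n)%nat -> 0 < p i) /\ sumn n p = 1.

Definition hell (n : nat) (p q : nat -> R) : R :=
  / 2 * sumn n (fun i => (sqrt (p i) - sqrt (q i)) ^ 2).

Definition Jdiv (n : nat) (p q : nat -> R) : R :=
  sumn n (fun i => (p i - q i) * ln (p i / q i)).

Definition Deltadiv (n : nat) (p q : nat -> R) : R :=
  sumn n (fun i => (p i - q i) ^ 2 / (p i + q i)).

Definition Psidiv (n : nat) (p q : nat -> R) : R :=
  sumn n (fun i => (p i - q i) ^ 2 * (p i + q i) / (p i * q i)).

Definition D_Jh (n : nat) (p q : nat -> R) : R := / 8 * Jdiv n p q - hell n p q.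

Definition D_PsiDelta (n : nat) (p q : nat -> R) : R :=
  / 16 * Psidiv n p q - / 4 * Deltadiv n p q.

(** With [a = sqrt p], [b = sqrt q] and [t = a / b], the inequality holds
    summand by summand: [/12 * (/16 psi - /4 delta) - (/8 j - hell)] equals
    [b (a + b) / 4 * (t - 1) * (ln_approx t - ln t)], where [ln_approx] is the
    rational function below.  The difference [ln_approx - ln] vanishes at [1]
    and its derivative is [(t - 1)^2 / t] times a nonnegative factor, so it
    has the sign of [t - 1]. *)

From Stdlib Require Import Reals Lra.
From Coquelicot Require Import Coquelicot.
Open Scope R_scope.

Lemma sumn_lin n a c (f g : nat -> R) :
  sumn n (fun i => a * f i - c * g i) = a * sumn n f - c * sumn n g.
Proof. induction n as [|n IH]; simpl; [ring | rewrite IH; ring]. Qed.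

Lemma sumn_scal n a (f : nat -> R) :
  sumn n (fun i => a * f i) = a * sumn n f.
Proof. induction n as [|n IH]; simpl; [ring | rewrite IH; ring]. Qed.

Lemma sumn_le n (f g : nat -> R) :
  (forall i, (i < n)%nat -> f i <= g i) -> sumn n f <= sumn n g.
Proof.
  induction n as [|n IH]; intros Hfg; simpl; [lra |].
  assert (sumn n f <= sumn n g) by (apply IH; auto).
  assert (f n <= g n) by auto.
  lra.
Qed.

Lemma nonneg_derive_sign (f f' : R -> R) (x0 t : R) :
  (forall c, 0 < c -> derivable_pt_lim f c (f' c)) ->
  (forall c, 0 < c -> 0 <= f' c) ->
  0 < x0 -> f x0 = 0 -> 0 < t -> 0 <= (t - x0) * f t.
Proof.
  intros Hf Hf' Hx0 Hfx0 Ht.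
  destruct (Rtotal_order t x0) as [Hlt | [-> | Hgt]].
  - destruct (MVT_cor2 f f' t x0 Hlt) as [c [Hdiff Hc]].
    { intros c Hc; apply Hf; lra. }
    assert (0 <= f' c) by (apply Hf'; lra).
    assert (f t <= 0) by nra.
    nra.
  - lra.
  - destruct (MVT_cor2 f f' x0 t Hgt) as [c [Hdiff Hc]].
    { intros c Hc; apply Hf; lra. }
    assert (0 <= f' c) by (apply Hf'; lra).
    assert (0 <= f t) by nra.
    nra.
Qed.

Definition ln_approx (t : R) : R :=
  2 * (t - 1) / (t + 1) + (t ^ 2 - 1) ^ 3 / (48 * t ^ 2 * (t ^ 2 + 1)).

Definition ln_approx_sub_ln_derive (t : R) : R :=
  (t - 1) ^ 2 / t *
  ((t + 1) ^ 2 * (t ^ 4 + 4 * t ^ 2 + 1) / (24 * t ^ 2 * (t ^ 2 + 1) ^ 2)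
   - 1 / (t + 1) ^ 2).

Lemma ln_approx_sub_ln_derivable t : 0 < t ->
  derivable_pt_lim (fun x => ln_approx x - ln x) t (ln_approx_sub_ln_derive t).
Proof.
  intros Ht. apply is_derive_Reals. unfold ln_approx, ln_approx_sub_ln_derive.
  auto_derive.
  - repeat split; try lra; nra.
  - field. repeat split; try lra; nra.
Qed.

Lemma ln_approx_sub_ln_derive_numerator_nonneg t : 0 < t ->
  0 <= (t + 1) ^ 4 * (t ^ 4 + 4 * t ^ 2 + 1) - 24 * t ^ 2 * (t ^ 2 + 1) ^ 2.
Proof.
  intros Ht.
  (* The polynomial is palindromic of degree 8, hence [t ^ 4] times a polynomial in [t + / t]. *)
  set (s := t + / t).
  assert (Hs : 0 <= s - 2).
  { replace (s - 2) with ((t - 1) ^ 2 / t) by (unfold s; field; lra).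
    apply Rdiv_le_0_compat; [apply pow2_ge_0 | lra]. }
  replace ((t + 1) ^ 4 * (t ^ 4 + 4 * t ^ 2 + 1) - 24 * t ^ 2 * (t ^ 2 + 1) ^ 2)
    with (t ^ 4 * ((s - 2) * ((s - 2) * (s ^ 2 + 8 * s + 10) + 16)))
    by (unfold s; field; lra).
  apply Rmult_le_pos; [apply pow_le; lra |].
  apply Rmult_le_pos; [lra | nra].
Qed.

Lemma ln_approx_sub_ln_derive_nonneg t : 0 < t -> 0 <= ln_approx_sub_ln_derive t.
Proof.
  intros Ht. unfold ln_approx_sub_ln_derive.
  apply Rmult_le_pos.
  { apply Rdiv_le_0_compat; [apply pow2_ge_0 | lra]. }
  assert (Hden : 0 < 24 * t ^ 2 * (t ^ 2 + 1) ^ 2) by (apply Rmult_lt_0_compat; nra).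
  assert (Ht1 : 0 < (t + 1) ^ 2) by nra.
  replace ((t + 1) ^ 2 * (t ^ 4 + 4 * t ^ 2 + 1) / (24 * t ^ 2 * (t ^ 2 + 1) ^ 2)
           - 1 / (t + 1) ^ 2)
    with (((t + 1) ^ 4 * (t ^ 4 + 4 * t ^ 2 + 1) - 24 * t ^ 2 * (t ^ 2 + 1) ^ 2)
          / (24 * t ^ 2 * (t ^ 2 + 1) ^ 2 * (t + 1) ^ 2))
    by (field; repeat split; nra).
  apply Rdiv_le_0_compat; [apply ln_approx_sub_ln_derive_numerator_nonneg; exact Ht | nra].
Qed.

Lemma sub_one_mul_ln_le_ln_approx t : 0 < t -> (t - 1) * ln t <= (t - 1) * ln_approx t.
Proof.
  intros Ht.
  assert (H := nonneg_derive_sign (fun x => ln_approx x - ln x) ln_approx_sub_ln_derive 1 t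
                 ln_approx_sub_ln_derivable ln_approx_sub_ln_derive_nonneg).
  assert (H1 : ln_approx 1 - ln 1 = 0) by (unfold ln_approx; rewrite ln_1; field).
  specialize (H Rlt_0_1 H1 Ht).
  simpl in H. nra.
Qed.

Definition Jh_term (p q : R) : R :=
  / 8 * ((p - q) * ln (p / q)) - / 2 * (sqrt p - sqrt q) ^ 2.

Definition PsiDelta_term (p q : R) : R :=
  / 16 * ((p - q) ^ 2 * (p + q) / (p * q)) - / 4 * ((p - q) ^ 2 / (p + q)).

Lemma D_Jh_sumn n (p q : nat -> R) :
  D_Jh n p q = sumn n (fun i => Jh_term (p i) (q i)).
Proof. unfold D_Jh, Jdiv, hell, Jh_term. rewrite sumn_lin. reflexivity. Qed.

Lemma D_PsiDelta_sumn n (p q : nat -> R) :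
  D_PsiDelta n p q = sumn n (fun i => PsiDelta_term (p i) (q i)).
Proof. unfold D_PsiDelta, Psidiv, Deltadiv, PsiDelta_term. rewrite sumn_lin. reflexivity. Qed.

Lemma Jh_term_le p q : 0 < p -> 0 < q -> Jh_term p q <= / 12 * PsiDelta_term p q.
Proof.
  intros Hp Hq.
  assert (Ha := sqrt_lt_R0 p Hp). assert (Hb := sqrt_lt_R0 q Hq).
  assert (Ep : p = sqrt p * sqrt p) by (rewrite sqrt_sqrt; lra).
  assert (Eq : q = sqrt q * sqrt q) by (rewrite sqrt_sqrt; lra).
  unfold Jh_term, PsiDelta_term.
  set (a := sqrt p) in *. set (b := sqrt q) in *. set (t := a / b).
  assert (Ht : 0 < t) by (apply Rdiv_lt_0_compat; lra).
  assert (Hln : ln (p / q) = 2 * ln t).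
  { replace (p / q) with (t * t) by (unfold t; rewrite Ep, Eq; field; lra).
    rewrite ln_mult by lra. ring. }
  rewrite Hln. clearbody a b. subst p q.
  assert (Hw : 0 < b * (a + b) / 4) by (apply Rdiv_lt_0_compat; nra).
  assert (HJ : / 8 * ((a * a - b * b) * (2 * ln t))
               = b * (a + b) / 4 * ((t - 1) * ln t)) by (unfold t; field; lra).
  assert (HPD : / 12 * (/ 16 * ((a * a - b * b) ^ 2 * (a * a + b * b) / (a * a * (b * b)))
                        - / 4 * ((a * a - b * b) ^ 2 / (a * a + b * b)))
                + / 2 * (a - b) ^ 2
                = b * (a + b) / 4 * ((t - 1) * ln_approx t)).
  { unfold t, ln_approx. field. repeat split; nra. }
  assert (b * (a + b) / 4 * ((t - 1) * ln t) <= b * (a + b) / 4 * ((t - 1) * ln_approx t))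
    by (apply Rmult_le_compat_l; [lra | apply sub_one_mul_ln_le_ln_approx; exact Ht]).
  lra.
Qed.

Theorem proposition5p9 (n : nat) (p q : nat -> R) :
  (2 <= n)%nat -> in_Gamma n p -> in_Gamma n q ->
  D_Jh n p q <= / 12 * D_PsiDelta n p q.
Proof.
  intros _ [Hp _] [Hq _].
  rewrite D_Jh_sumn, D_PsiDelta_sumn, <- sumn_scal.
  apply sumn_le. intros i Hi.
  apply Jh_term_le; auto.
Qed.
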